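(* Let $q>0$, $q\neq1$. For every integer $N\ge0$, $$H_N(x;q)=[2]_q^N\,e^{-\frac{1}{[2]_q^2}D_x^2}\,x^N,$$ where $e^{aD_x^2}:=\sum_{n\ge0}\frac{a^n}{n!}D_x^{2n}$ (a finite sum on polynomials).
   Context: For $n\ge 0$ let $[n]_q=\frac{q^n-1}{q-1}$, $[0]_q!=1$, $[n]_q!=[1]_q\cdots[n]_q$, and $e_q(z)=\sum_{n\ge0}z^n/[n]_q!$. The $q$-derivative acts on polynomials by $D_x x^n=[n]_qx^{n-1}$ (equivalently $D_xf(x)=\frac{f(qx)-f(x)}{(q-1)x}$). The $q$-Hermite polynomials $H_N(x;q)$ are defined by the identity of formal power series in $t$: $e^{-t^2}e_q([2]_q t x)=\sum_{N\ge0}H_N(x;q)\,t^N/[N]_q!$. *)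

From HB Require Import structures.
From mathcomp Require Import all_boot all_order all_algebra.
From mathcomp Require Import reals.
Set Implicit Arguments. Unset Strict Implicit. Unset Printing Implicit Defensive.
Import Order.TTheory GRing.Theory Num.Theory.
Local Open Scope ring_scope.

Section QHermite.
Variable R : realType.

Definition qint (q : R) (n : nat) : R := (q ^+ n - 1) / (q - 1).

Definition qfact (q : R) (n : nat) : R := \prod_(1 <= i < n.+1) qint q i.

(* q-derivative on polynomials: D_x x^n = [n]_q x^(n-1), extended linearly *)
Definition qderiv (q : R) (p : {poly R}) : {poly R} :=
  \poly_(i < (size p).-1) (qint q i.+1 * p`_i.+1).

(* coefficient of t^n in e^{-t^2} *)
Definition expmsq_coef (n : nat) : R :=
  if ~~ odd n then (-1) ^+ n./2 / (n./2)`!%:R else 0.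

(* coefficient of t^n in e_q([2]_q t x) (a polynomial in x) *)
Definition eq_coef (q : R) (n : nat) : {poly R} :=
  ((qint q 2) ^+ n / qfact q n) *: 'X^n.

(* coefficient of t^N in the product e^{-t^2} e_q([2]_q t x) *)
Definition gen_coef (q : R) (N : nat) : {poly R} :=
  \sum_(i < N.+1) expmsq_coef i *: eq_coef q (N - i).

(* H_N(x;q) : defined by  gen_coef q N = H_N / [N]_q!  *)
Definition qHermite (q : R) (N : nat) : {poly R} := qfact q N *: gen_coef q N.

(* e^{a D_x^2} p = sum_{n>=0} a^n/n! D_x^{2n} p ; on x^N terms with 2n > N
   vanish, so summing n <= N is exact for deg p <= N *)
Definition expqD2 (q a : R) (N : nat) (p : {poly R}) : {poly R} :=
  \sum_(n < N.+1) (a ^+ n / n`!%:R) *: iter (2 * n) (qderiv q) p.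

End QHermite.

From HB Require Import structures.
From mathcomp Require Import all_boot all_order all_algebra.
From mathcomp Require Import reals.
From mathcomp Require Import ring.
Set Implicit Arguments. Unset Strict Implicit. Unset Printing Implicit Defensive.
Import Order.TTheory GRing.Theory Num.Theory.
Local Open Scope ring_scope.

(* [D_x^k x^N] is the q-falling factorial [N]_q[N-1]_q...[N-k+1]_q times
   [x^(N-k)], and [N]_q! is [(N-k)]_q! times that falling factorial.  Expanding
   [e^{-t^2}] termwise, both sides become the same sum over even powers
   [t^(2n)] of [e^{-t^2}]; terms with [2n > N] vanish on both sides because the
   falling factorial then contains the factor [[0]_q = 0]. *)

Lemma sum_ord_even (V : nmodType) (F : nat -> V) (m : nat) :
  (forall i, odd i -> F i = 0) -> (forall i, (m <= i)%N -> F i = 0) ->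
  \sum_(i < m) F i = \sum_(n < m) F n.*2.
Proof.
move=> Fodd Ftail.
have pairs j : \sum_(i < j.*2) F i = \sum_(n < j) (F n.*2 + F n.*2.+1).
  elim: j => [|j IH]; first by rewrite !big_ord0.
  by rewrite doubleS !big_ord_recr /= IH addrA.
have -> : \sum_(i < m) F i = \sum_(i < m.*2) F i.
  rewrite -!(big_mkord xpredT) -addnn (@big_cat_nat _ _ _ m 0 (m + m)) ?leq_addr //=.
  rewrite [\sum_(m <= i < m + m) F i]big1_seq ?addr0 // => i /andP[_].
  by rewrite mem_index_iota => /andP[/Ftail].
rewrite pairs; apply: eq_bigr => n _.
by rewrite [F n.*2.+1]Fodd ?addr0 //= odd_double.
Qed.

Section QHermiteProof.
Variable R : realType.
Implicit Types (q : R) (p : {poly R}).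

Definition qffact q (N k : nat) : R := \prod_(j < k) qint q (N - j).

Lemma qint0 q : qint q 0 = 0.
Proof. by rewrite /qint expr0 subrr mul0r. Qed.

Lemma qffact_eq0 q N k : (N < k)%N -> qffact q N k = 0.
Proof.
move=> ltNk; apply/eqP; rewrite prodf_seq_eq0.
by apply/hasP; exists (Ordinal ltNk); rewrite ?mem_index_enum //= subnn qint0.
Qed.

Lemma coef_qderiv q p i : (qderiv q p)`_i = qint q i.+1 * p`_i.+1.
Proof.
rewrite /qderiv coef_poly; case: ltnP => // le_p_i.
by rewrite nth_default ?mulr0 // (leq_trans (leqSpred _)).
Qed.

Lemma qderivZ q c p : qderiv q (c *: p) = c *: qderiv q p.
Proof. by apply/polyP => i; rewrite coefZ !coef_qderiv coefZ mulrCA. Qed.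

Lemma qderivXn q n : qderiv q 'X^n = qint q n *: 'X^(n.-1).
Proof.
apply/polyP => i; rewrite coef_qderiv coefZ !coefXn.
case: n => [|n] /=; first by rewrite qint0 mul0r mulr0.
by rewrite eqSS; case: eqP => [->|]; rewrite ?mulr1 ?mulr0.
Qed.

Lemma iter_qderivXn q N k : iter k (qderiv q) 'X^N = qffact q N k *: 'X^(N - k).
Proof.
elim: k => [|k IH]; first by rewrite /qffact big_ord0 scale1r subn0.
by rewrite iterS IH qderivZ qderivXn /qffact big_ord_recr /= scalerA subnS.
Qed.

Lemma qfactS q n : qfact q n.+1 = qfact q n * qint q n.+1.
Proof. by rewrite /qfact big_nat_recr. Qed.

Lemma qfact_split q N k : (k <= N)%N -> qfact q N = qfact q (N - k) * qffact q N k.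
Proof.
elim: k => [|k IH] le_k_N; first by rewrite /qffact big_ord0 mulr1 subn0.
rewrite IH 1?ltnW // /qffact big_ord_recr /= [LHS]mulrC [RHS]mulrCA.
by congr (_ * _); rewrite -(subnSK le_k_N) qfactS.
Qed.

Lemma expmsq_coef_odd i : odd i -> expmsq_coef R i = 0.
Proof. by rewrite /expmsq_coef => ->. Qed.

Lemma expmsq_coef_double n : expmsq_coef R n.*2 = (-1) ^+ n / n`!%:R.
Proof. by rewrite /expmsq_coef odd_double doubleK. Qed.

Variables (q : R) (q_gt0 : 0 < q) (q_neq1 : q != 1).

Lemma qint_neq0 i : qint q i.+1 != 0.
Proof.
by rewrite /qint mulf_neq0 ?invr_eq0 ?subr_eq0 // pexpr_eq1 // ltW.
Qed.

Lemma qfact_neq0 n : qfact q n != 0.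
Proof.
elim: n => [|n IH]; first by rewrite /qfact big_geq ?oner_neq0.
by rewrite qfactS mulf_neq0 ?qint_neq0.
Qed.

Lemma qfact_scale_eq_coef N i : (i <= N)%N ->
  qfact q N *: eq_coef q (N - i)
  = (qint q 2 ^+ (N - i) * qffact q N i) *: 'X^(N - i).
Proof.
move=> le_i_N; rewrite /eq_coef scalerA (qfact_split q le_i_N); congr (_ *: _).
by field; rewrite qfact_neq0.
Qed.

End QHermiteProof.

Theorem proposition2 (R : realType) (q : R) (hq0 : 0 < q) (hq1 : q != 1)
  (N : nat) :
  qHermite q N =
  (qint q 2) ^+ N *: expqD2 q (- (qint q 2) ^-2) N 'X^N.
Proof.
set c := qint q 2; have c_neq0 : c != 0 by apply: qint_neq0.
pose F i := (expmsq_coef R i * (c ^+ (N - i) * qffact q N i)) *: 'X^(N - i).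
have -> : qHermite q N = \sum_(i < N.+1) F i.
  rewrite /qHermite /gen_coef scaler_sumr; apply: eq_bigr => -[i /= le_i_N] _.
  by rewrite scalerA [qfact q N * _]mulrC -scalerA qfact_scale_eq_coef // scalerA.
have F_odd i : odd i -> F i = 0.
  by move=> /expmsq_coef_odd e0; rewrite /F e0 mul0r scale0r.
have F_tail i : (N.+1 <= i)%N -> F i = 0.
  by move=> /(qffact_eq0 q) f0; rewrite /F f0 !mulr0 scale0r.
rewrite (sum_ord_even F_odd F_tail).
rewrite /expqD2 scaler_sumr; apply: eq_bigr => n _.
rewrite iter_qderivXn mul2n /F expmsq_coef_double !scalerA; congr (_ *: _).
have [le_2n_N | lt_N_2n] := leqP n.*2 N; last by rewrite qffact_eq0 // !mulr0.
have -> : c ^+ N = c ^+ (N - n.*2) * c ^+ n.*2 by rewrite -exprD subnK.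
rewrite [in RHS]exprNn exprVn -exprM mul2n.
by field; rewrite pnatr_eq0 -lt0n fact_gt0 expf_neq0.
Qed.
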